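(* Let $\mathcal{H}$ be a Hilbert space of finite dimension $d$, and let the set of free states be $\mathcal{F}(\mathcal{H})=\bigcup_k\mathcal{F}_k(\mathcal{H})\subseteq\mathcal{D}(\mathcal{H})$, where each $\mathcal{F}_k(\mathcal{H})$ is a closed convex set and $\mathcal{F}(\mathcal{H})$ is closed. For any resource state $\rho\in\mathcal{D}(\mathcal{H})\setminus\mathcal{F}(\mathcal{H})$, \[\inf_k\ \max_{\{p_i,\Lambda_i\}_i,\{M_i\}_i}\frac{p_{\mathrm{succ}}(\rho,\{p_i,\Lambda_i\}_i,\{M_i\}_i)}{\max_{\sigma_k\in\mathcal{F}_k(\mathcal{H})}p_{\mathrm{succ}}(\sigma_k,\{p_i,\Lambda_i\}_i,\{M_i\}_i)}=1+R_{\mathcal{F}(\mathcal{H})}(\rho).\]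
   Context: $\mathcal{D}(\mathcal{H})$ is the set of density operators on $\mathcal{H}$. A channel ensemble $\{p_i,\Lambda_i\}_i$ consists of a finite probability distribution $(p_i)_i$ and quantum channels $\Lambda_i$ from operators on $\mathcal{H}$ to operators on a common finite-dimensional output space; $\{M_i\}_i$ is a POVM on the output space; $p_{\mathrm{succ}}(\omega,\{p_i,\Lambda_i\}_i,\{M_i\}_i)=\sum_ip_i\operatorname{tr}[M_i\Lambda_i(\omega)]$. The maximum in the numerator/denominator ratio is over all channel ensembles and POVMs. The generalized robustness is $R_{\mathcal{F}(\mathcal{H})}(\rho)=\min\{s\ge0:\exists\tau\in\mathcal{D}(\mathcal{H}),\ \frac{\rho+s\tau}{1+s}\in\mathcal{F}(\mathcal{H})\}$. *)

From HB Require Import structures.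
From mathcomp Require Import all_boot all_order all_algebra.
From mathcomp Require Import all_classical all_reals all_analysis.
From mathcomp Require Import complex.
Set Implicit Arguments. Unset Strict Implicit. Unset Printing Implicit Defensive.
Import Order.TTheory GRing.Theory Num.Theory.
Import numFieldNormedType.Exports.
Local Open Scope classical_set_scope.
Local Open Scope ring_scope.
Local Open Scope complex_scope.

Section Quantum.
Variable R : realType.
Local Notation C := (R[i]).

Definition adj (m n : nat) (A : 'M[C]_(m, n)) : 'M[C]_(n, m) :=
  (map_mx Num.conj A)^T.

Definition psd (n : nat) (A : 'M[C]_n) : Prop :=
  A = adj A /\ forall v : 'cV[C]_n, 0 <= (adj v *m A *m v) 0 0.

Definition density (d : nat) : set 'M[C]_d :=
  [set A | psd A /\ \tr A = 1].
Arguments density d : clear implicits.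

Definition is_channel (d d' : nat) (L : 'M[C]_d -> 'M[C]_d') : Prop :=
  exists (m : nat) (K : 'I_m -> 'M[C]_(d', d)),
    \sum_(j < m) adj (K j) *m K j = 1%:M /\
    forall X, L X = \sum_(j < m) K j *m X *m adj (K j).

Definition is_prob (n : nat) (p : 'I_n -> R) : Prop :=
  (forall i, 0 <= p i) /\ \sum_(i < n) p i = 1.

Definition is_povm (d' n : nat) (M : 'I_n -> 'M[C]_d') : Prop :=
  (forall i, psd (M i)) /\ \sum_(i < n) M i = 1%:M.

(* a channel ensemble {p_i, Lambda_i}_i together with a POVM {M_i}_i *)
Record game (d : nat) := Game {
  g_n : nat;
  g_dout : nat;
  g_p : 'I_g_n -> R;
  g_L : 'I_g_n -> 'M[C]_d -> 'M[C]_g_dout;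
  g_M : 'I_g_n -> 'M[C]_g_dout }.
Arguments g_n {d} g.
Arguments g_dout {d} g.
Arguments g_p {d} g i.
Arguments g_L {d} g i _.
Arguments g_M {d} g i.

Definition valid_game (d : nat) (g : game d) : Prop :=
  is_prob (g_p g) /\ (forall i, is_channel (g_L g i)) /\ is_povm (g_M g).

Definition psucc (d : nat) (w : 'M[C]_d) (g : game d) : R :=
  \sum_(i < g_n g) g_p g i * complex.Re (\tr (g_M g i *m g_L g i w)).

Definition mx_convex (d : nat) (S : set 'M[C]_d) : Prop :=
  forall A B (t : R), S A -> S B -> 0 <= t <= 1 ->
    S (t%:C *: A + (1 - t)%:C *: B).

Definition mx_closed (d : nat) (S : set 'M[C]_d) : Prop :=
  forall (u : nat -> 'M[C]_d) (A : 'M[C]_d),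
    (forall k, S (u k)) ->
    (forall i j, (fun k => complex.Re (u k i j)) @ \oo --> complex.Re (A i j)) ->
    (forall i j, (fun k => complex.Im (u k i j)) @ \oo --> complex.Im (A i j)) ->
    S A.

Local Open Scope ereal_scope.

Definition max_psucc (d : nat) (S : set 'M[C]_d) (g : game d) : \bar R :=
  ereal_sup [set (psucc s g)%:E | s in S].

(* p_succ(rho, g) / max_{sigma in S} p_succ(sigma, g)  (x/0 = +oo, 0/0 = 0) *)
Definition game_ratio (d : nat) (rho : 'M[C]_d) (S : set 'M[C]_d) (g : game d)
  : \bar R := (psucc rho g)%:E * (max_psucc S g)^-1.

Definition max_ratio (d : nat) (rho : 'M[C]_d) (S : set 'M[C]_d) : \bar R :=
  ereal_sup [set game_ratio rho S g | g in [set g : game d | valid_game g]].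

Definition gen_robustness (d : nat) (F : set 'M[C]_d) (rho : 'M[C]_d) : \bar R :=
  ereal_inf [set s%:E | s in [set s : R | (0 <= s)%R /\
     exists tau, density d tau /\
       F (((1 + s)^-1)%R%:C *: (rho + s%:C *: tau))]].

End Quantum.
Arguments density {R} d.

(* Upper bound: if sigma = (rho + s tau) / (1 + s) lies in F_k, then, p_succ being linear
   and nonnegative on states, p_succ(rho) <= (1 + s) p_succ(sigma) in every game, so every
   ratio for F_k is at most 1 + s.
   Lower bound: for 1 < c < 1 + R_F(rho), no sigma in F_k satisfies c sigma >= rho, i.e. the
   compact convex set {c sigma - rho | sigma in F_k} misses the positive semidefinite cone.
   The point z of minimal Frobenius norm in its Loewner lower set {c sigma - rho - Q | Q >= 0}
   gives W = -z >= 0 and delta = |z|^2 > 0 with c <W, sigma> + delta <= <W, rho> on F_k.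
   Scaled below the identity, W yields the two-outcome measurement {W, 1 - W}, a game whose
   ratio is at least c; the measurement {1, 0} shows that the ratio is always at least 1. *)

From HB Require Import structures.
From mathcomp Require Import all_boot all_order all_algebra.
From mathcomp Require Import all_classical all_reals all_analysis.
From mathcomp Require Import complex.
From mathcomp Require Import ring lra spectral.
Import Order.TTheory GRing.Theory Num.Theory.
Import numFieldNormedType.Exports.
Set Implicit Arguments. Unset Strict Implicit. Unset Printing Implicit Defensive.
Local Open Scope classical_set_scope.
Local Open Scope ring_scope.
Local Open Scope complex_scope.

Section QuantumResourceGames.
Variable R : realType.
Local Notation C := R[i].
Local Notation Re := (@complex.Re R).
Local Notation Im := (@complex.Im R).

Lemma increasing_seq_geq (f : nat -> nat) :
  increasing_seq f -> forall n, (n <= f n)%N.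
Proof.
move=> /increasing_seqP f_incr; elim=> // n IHn.
exact: leq_ltn_trans IHn (f_incr n).
Qed.

Lemma increasing_seq_comp (f g : nat -> nat) :
  increasing_seq f -> increasing_seq g -> increasing_seq (f \o g).
Proof. by move=> f_incr g_incr n m; apply: etrans (f_incr _ _) (g_incr n m). Qed.

Lemma cvg_increasing_seq (f : nat -> nat) : increasing_seq f -> f @ \oo --> \oo.
Proof.
move=> f_incr P [n _ Pn]; exists n => // m /= nm.
exact/Pn/(leq_trans nm)/increasing_seq_geq.
Qed.

Lemma cvgn_subseq (u : R ^nat) (f : nat -> nat) :
  increasing_seq f -> cvgn u -> cvgn (u \o f).
Proof.
move=> /cvg_increasing_seq f_oo /cvg_ex[l u_l].
by apply/cvg_ex; exists l; apply: cvg_comp u_l.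
Qed.

Lemma bolzano_weierstrass_fin (I : finType) (u : I -> R ^nat) :
  (forall i, bounded_fun (u i)) ->
  exists2 f : nat -> nat, increasing_seq f & forall i, cvgn (u i \o f).
Proof.
move=> u_bd.
suff [f f_incr cvg_f] : exists2 f : nat -> nat, increasing_seq f &
    forall i, i \in enum I -> cvgn (u i \o f).
  by exists f => // i; apply: cvg_f; rewrite mem_enum.
elim: (enum I) => [|i s [f f_incr cvg_f]]; first by exists id.
have [M [M_real uM]] := u_bd i.
have [g g_incr cvg_g] : exists2 g : nat -> nat, increasing_seq g & cvgn (u i \o f \o g).
  by apply: bolzano_weierstrass; exists M; split => // x Mx n _; apply: uM.
exists (f \o g) => [|j]; first exact: increasing_seq_comp.
by rewrite in_cons => /predU1P[-> // | js]; apply: cvgn_subseq g_incr (cvg_f j js).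
Qed.

Lemma Re_realM (t : R) (x : C) : Re (t%:C * x) = t * Re x.
Proof. by case: x => a b /=; ring. Qed.

Lemma Im_realM (t : R) (x : C) : Im (t%:C * x) = t * Im x.
Proof. by case: x => a b /=; ring. Qed.

Lemma adjE m n (A : 'M[C]_(m, n)) i j : adj A i j = (A j i)^*.
Proof. by rewrite !mxE. Qed.

Lemma adj_trmxC m n (A : 'M[C]_(m, n)) : adj A = (A ^t* )%sesqui.
Proof. by rewrite /adj map_trmx. Qed.

Lemma adjK m n (A : 'M[C]_(m, n)) : adj (adj A) = A.
Proof. by rewrite !adj_trmxC trmxCK. Qed.

Lemma adjD m n (A B : 'M[C]_(m, n)) : adj (A + B) = adj A + adj B.
Proof. by rewrite /adj map_mxD linearD. Qed.

Lemma adjN m n (A : 'M[C]_(m, n)) : adj (- A) = - adj A.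
Proof. by rewrite /adj map_mxN linearN. Qed.

Lemma adj_realZ m n (t : R) (A : 'M[C]_(m, n)) : adj (t%:C *: A) = t%:C *: adj A.
Proof. by apply/matrixP => i j; rewrite !mxE; case: (A j i) => a b; simpc. Qed.

Lemma adjM m n p (A : 'M[C]_(m, n)) (B : 'M[C]_(n, p)) :
  adj (A *m B) = adj B *m adj A.
Proof. by rewrite /adj map_mxM trmx_mul. Qed.

Lemma adj_mx1 n : adj (1%:M : 'M[C]_n) = 1%:M.
Proof. by rewrite /adj map_mx1 trmx1. Qed.

Lemma adj_mx0 m n : adj (0 : 'M[C]_(m, n)) = 0.
Proof. by rewrite /adj map_mx0 trmx0. Qed.

Section Psd.
Variable d : nat.
Implicit Types (A B X : 'M[C]_d) (v : 'cV[C]_d).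

Definition qf v A : C := (adj v *m A *m v) 0 0.

Lemma qfE v A : qf v A = \sum_i \sum_j (v i 0)^* * A i j * v j 0.
Proof.
rewrite /qf mxE exchange_big; apply: eq_bigr => j _.
by rewrite mxE mulr_suml; apply: eq_bigr => i _; rewrite adjE.
Qed.

Lemma qfD v A B : qf v (A + B) = qf v A + qf v B.
Proof. by rewrite /qf mulmxDr mulmxDl mxE. Qed.

Lemma qfN v A : qf v (- A) = - qf v A.
Proof. by rewrite /qf mulmxN mulNmx mxE. Qed.

Lemma qfZ v (k : C) A : qf v (k *: A) = k * qf v A.
Proof. by rewrite /qf -scalemxAr -scalemxAl mxE. Qed.

Lemma conj_qf v A : (qf v A)^* = qf v (adj A).
Proof.
have -> : (qf v A)^* = adj (adj v *m A *m v) 0 0 by rewrite adjE.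
by rewrite !adjM adjK mulmxA.
Qed.

Lemma psdP A : psd A <-> A = adj A /\ forall v, 0 <= Re (qf v A).
Proof.
split=> -[A_herm A_ge0]; split=> // v.
  by have := A_ge0 v; rewrite lecE => /andP[].
rewrite lecE -/(qf v A) A_ge0 andbT.
have : (qf v A)^* = qf v A by rewrite conj_qf -A_herm.
by case: (qf v A) => a b /(congr1 Im) /= b0; apply/eqP; lra.
Qed.

Lemma psd0 : psd (0 : 'M[C]_d).
Proof. by split; [rewrite adj_mx0 | move=> v; rewrite mulmx0 mul0mx mxE]. Qed.

Lemma psdD A B : psd A -> psd B -> psd (A + B).
Proof.
move=> [A_herm A_ge0] [B_herm B_ge0]; split; first by rewrite adjD -A_herm -B_herm.
by move=> v; rewrite -/(qf v _) qfD addr_ge0 //; [apply: A_ge0 | apply: B_ge0].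
Qed.

Lemma psdZ (t : R) A : 0 <= t -> psd A -> psd (t%:C *: A).
Proof.
move=> t_ge0 [A_herm A_ge0]; split; first by rewrite adj_realZ -A_herm.
by move=> v; rewrite -/(qf v _) qfZ mulr_ge0 ?ler0c //; apply: A_ge0.
Qed.

Lemma psd_sum (I : Type) (r : seq I) (P : pred I) (F : I -> 'M[C]_d) :
  (forall i, P i -> psd (F i)) -> psd (\sum_(i <- r | P i) F i).
Proof. by move=> F_psd; elim/big_ind: _ => //; [apply: psd0 | apply: psdD]. Qed.

Lemma psd_conj d' (K : 'M[C]_(d', d)) X : psd X -> psd (K *m X *m adj K).
Proof.
move=> [X_herm X_ge0]; split; first by rewrite !adjM adjK -X_herm mulmxA.
by move=> v; have := X_ge0 (adj K *m v); rewrite adjM adjK !mulmxA.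
Qed.

Lemma psd_rank1 v : psd (v *m adj v).
Proof.
split=> [|u]; first by rewrite adjM adjK.
rewrite mulmxA -(mulmxA (adj u *m v)) mxE big_ord1.
have -> : (adj v *m u) 0 0 = ((adj u *m v) 0 0)^* by rewrite -adjE adjM adjK.
exact: mulcJ_ge0.
Qed.

Lemma psd1 : psd (1%:M : 'M[C]_d).
Proof.
split=> [|v]; first by rewrite adj_mx1.
by rewrite mulmx1 mxE sumr_ge0 // => i _; rewrite adjE mulrC mulcJ_ge0.
Qed.

Lemma psd_trace_mul_ge0 A B : psd A -> psd B -> 0 <= \tr (A *m B).
Proof.
move=> [_ A_ge0] [B_herm B_ge0].
have : B \is normalmx by apply/normalmxP; rewrite -adj_trmxC -B_herm.
move=> /orthomx_spectralP; set U := spectralmx B; set D := spectral_diag B.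
have U_unitary : U \is unitarymx := spectral_unitarymx B.
have UU : U *m adj U = 1%:M by rewrite adj_trmxC; apply/unitarymxP.
rewrite invmx_unitary // -adj_trmxC => B_diag.
have UBU : U *m B *m adj U = diag_mx D.
  by rewrite B_diag !mulmxA UU mul1mx -mulmxA UU mulmx1.
have diag_qf X k : (U *m X *m adj U) k k = qf (adj (row k U)) X.
  by rewrite /qf adjK -row_mul !mxE; apply: eq_bigr => j _; rewrite !mxE.
have -> : \tr (A *m B) = \tr ((U *m A *m adj U) *m diag_mx D).
  by rewrite {1}B_diag !mulmxA mxtrace_mulC !mulmxA.
rewrite mul_mx_diag /mxtrace sumr_ge0 // => k _; rewrite mxE.
have -> : D 0 k = (U *m B *m adj U) k k by rewrite UBU mxE eqxx mulr1n.
by rewrite !diag_qf mulr_ge0 //; [apply: A_ge0 | apply: B_ge0].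
Qed.

End Psd.

Section Frobenius.
Variable d : nat.
Implicit Types (W X Y Z : 'M[C]_d) (v : 'cV[C]_d).

Definition frob X Y : R :=
  \sum_i \sum_j (Re (X i j) * Re (Y i j) + Im (X i j) * Im (Y i j)).

Lemma frobC X Y : frob X Y = frob Y X.
Proof. by apply: eq_bigr => i _; apply: eq_bigr => j _; rewrite mulrC [Im _ * _]mulrC. Qed.

Lemma frobDl X Y Z : frob (X + Y) Z = frob X Z + frob Y Z.
Proof.
rewrite /frob -big_split; apply: eq_bigr => i _; rewrite -big_split.
by apply: eq_bigr => j _; rewrite !mxE !raddfD /=; ring.
Qed.

Lemma frobZl (t : R) X Y : frob (t%:C *: X) Y = t * frob X Y.
Proof.
rewrite /frob mulr_sumr; apply: eq_bigr => i _; rewrite mulr_sumr.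
by apply: eq_bigr => j _; rewrite !mxE; case: (X i j) => a b /=; ring.
Qed.

Lemma frobNl X Y : frob (- X) Y = - frob X Y.
Proof.
rewrite /frob -sumrN; apply: eq_bigr => i _; rewrite -sumrN.
by apply: eq_bigr => j _; rewrite !mxE !raddfN /=; ring.
Qed.

Lemma frobDr X Y Z : frob X (Y + Z) = frob X Y + frob X Z.
Proof. by rewrite frobC frobDl !(frobC X). Qed.

Lemma frobNr X Y : frob X (- Y) = - frob X Y.
Proof. by rewrite frobC frobNl frobC. Qed.

Lemma frobZr (t : R) X Y : frob X (t%:C *: Y) = t * frob X Y.
Proof. by rewrite frobC frobZl frobC. Qed.

Lemma frob_ge0 X : 0 <= frob X X.
Proof.
by rewrite sumr_ge0 // => i _; rewrite sumr_ge0 // => j _; rewrite -!expr2 addr_ge0 ?sqr_ge0.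
Qed.

Lemma entry_le_frob X i j : Re (X i j) ^+ 2 + Im (X i j) ^+ 2 <= frob X X.
Proof.
have term_ge0 k l : 0 <= Re (X k l) * Re (X k l) + Im (X k l) * Im (X k l).
  by rewrite -!expr2 addr_ge0 ?sqr_ge0.
rewrite /frob (bigD1 i) //= (bigD1 j) //= !expr2 -addrA lerDl.
by rewrite addr_ge0 ?sumr_ge0 // => k _; rewrite sumr_ge0.
Qed.

Lemma frob_eq0 X : frob X X = 0 -> X = 0.
Proof.
move=> X0; apply/matrixP => i j; rewrite mxE.
have := entry_le_frob X i j; rewrite X0.
case: (X i j) => a b /= ab0.
have [a0 b0] : a ^+ 2 == 0 /\ b ^+ 2 == 0.
  by have := sqr_ge0 a; have := sqr_ge0 b; split; apply/eqP; lra.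
by move: a0 b0; rewrite !sqrf_eq0 => /eqP -> /eqP ->.
Qed.

Lemma frob_trace X Y : Y = adj Y -> Re (\tr (X *m Y)) = frob X Y.
Proof.
move=> Y_herm; rewrite /mxtrace raddf_sum; apply: eq_bigr => i _.
rewrite mxE raddf_sum; apply: eq_bigr => j _; rewrite {1}Y_herm adjE.
by case: (X i j) => a b; case: (Y i j) => c e /=; ring.
Qed.

Lemma frob_rank1 W v : frob W (v *m adj v) = Re (qf v W).
Proof.
rewrite qfE raddf_sum; apply: eq_bigr => i _; rewrite raddf_sum; apply: eq_bigr => j _.
rewrite mxE big_ord1 adjE.
by case: (v i 0) => a b; case: (W i j) => c e; case: (v j 0) => f g /=; ring.
Qed.

Lemma Re_qf1 v : Re (qf v 1%:M) = \sum_k (Re (v k 0) ^+ 2 + Im (v k 0) ^+ 2).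
Proof.
rewrite /qf mulmx1 mxE raddf_sum; apply: eq_bigr => k _.
by rewrite adjE; case: (v k 0) => a b /=; ring.
Qed.

Definition mx_l1 W : R := \sum_i \sum_j (`|Re (W i j)| + `|Im (W i j)|).

Lemma mx_l1_ge0 W : 0 <= mx_l1 W.
Proof. by rewrite sumr_ge0 // => i _; rewrite sumr_ge0 // => j _; rewrite addr_ge0. Qed.

Lemma Re_conjM_le (a w b : C) : Re (a^* * w * b) <=
  (`|Re w| + `|Im w|) * ((Re a ^+ 2 + Im a ^+ 2 + Re b ^+ 2 + Im b ^+ 2) / 2).
Proof.
case: a w b => [a1 a2] [w1 w2] [b1 b2] /=; set S := _ / 2.
have normM_le (x p : R) : `|p| <= S -> x * p <= `|x| * S.
  by move=> pS; rewrite (le_trans (ler_norm _)) // normrM ler_wpM2l.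
have h1 : `|a1 * b1 + a2 * b2| <= S.
  have := sqr_ge0 (a1 + b1); have := sqr_ge0 (a2 + b2).
  have := sqr_ge0 (a1 - b1); have := sqr_ge0 (a2 - b2).
  by rewrite ler_norml /S; move=> *; apply/andP; split; nra.
have h2 : `|a2 * b1 - a1 * b2| <= S.
  have := sqr_ge0 (a2 + b1); have := sqr_ge0 (a1 + b2).
  have := sqr_ge0 (a2 - b1); have := sqr_ge0 (a1 - b2).
  by rewrite ler_norml /S; move=> *; apply/andP; split; nra.
have := normM_le w1 _ h1; have := normM_le w2 _ h2; rewrite mulrDl; nra.
Qed.

Lemma Re_qf_le_l1 W v : Re (qf v W) <= mx_l1 W * Re (qf v 1%:M).
Proof.
have vk_le k : Re (v k 0) ^+ 2 + Im (v k 0) ^+ 2 <= Re (qf v 1%:M).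
  rewrite Re_qf1 (bigD1 k) //= lerDl sumr_ge0 // => l _.
  by rewrite addr_ge0 ?sqr_ge0.
rewrite qfE raddf_sum /mx_l1 mulr_suml ler_sum // => i _.
rewrite raddf_sum mulr_suml ler_sum // => j _.
rewrite (le_trans (Re_conjM_le _ _ _)) // ler_wpM2l ?addr_ge0 //.
by have := vk_le i; have := vk_le j; lra.
Qed.

Lemma psd_le1_normalized W : psd W -> psd (1%:M - ((1 + mx_l1 W)^-1)%:C *: W).
Proof.
move=> /psdP[W_herm W_ge0]; apply/psdP; split.
  by rewrite adjD adjN adj_realZ adj_mx1 -W_herm.
move=> v; rewrite qfD qfN qfZ raddfD raddfN /= Re_realM.
have l1_ge0 := mx_l1_ge0 W.
have N_ge0 : 0 <= Re (qf v 1%:M) by rewrite Re_qf1 sumr_ge0 // => k _; rewrite addr_ge0 ?sqr_ge0.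
have := Re_qf_le_l1 W v; set a := (1 + mx_l1 W)^-1 => qf_le.
have a_gt0 : 0 < a by rewrite invr_gt0; lra.
have a_l1 : a * (1 + mx_l1 W) = 1 by rewrite mulVf // gt_eqF //; lra.
have := ler_wpM2l (ltW a_gt0) qf_le; nra.
Qed.

End Frobenius.

Section DensityEntries.
Variable d : nat.

Lemma qf_pair (A : 'M[C]_d) i j (z : C) :
  qf (\col_k ((k == i)%:R + z * (k == j)%:R)) A =
  A i i + z * A i j + z^* * (A j i + z * A j j).
Proof.
have delta_sum (F : 'I_d -> C) l : \sum_k ((k == l)%:R * F k) = F l.
  by rewrite (bigD1 l) //= eqxx mul1r big1 ?addr0 // => k /negbTE ->; rewrite mul0r.
rewrite qfE.
have inner k (a : C) : \sum_l (a * A k l * (\col_m ((m == i)%:R + z * (m == j)%:R)) l 0)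
    = a * A k i + a * A k j * z.
  rewrite (eq_bigr (fun l => (l == i)%:R * (a * A k l) + (l == j)%:R * (a * A k l * z))).
    by rewrite big_split /= !delta_sum.
  by move=> l _; rewrite mxE; ring.
under eq_bigr do rewrite inner.
rewrite (eq_bigr (fun k => (k == i)%:R * (A k i + A k j * z) +
                           (k == j)%:R * (z^* * (A k i + A k j * z)))).
  by rewrite big_split /= !delta_sum; ring.
by move=> k _; rewrite mxE rmorphD rmorphM !rmorph_nat; ring.
Qed.

Lemma density_diag_bounds (s : 'M[C]_d) k : density d s -> 0 <= Re (s k k) <= 1.
Proof.
move=> [/psdP[_ s_ge0] tr_s].
have diag_ge0 l : 0 <= Re (s l l).
  have := s_ge0 (\col_m ((m == l)%:R + 0 * (m == l)%:R)).
  by rewrite qf_pair !mul0r !addr0 rmorph0 mul0r addr0.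
rewrite diag_ge0 /=.
have : Re (\tr s) = 1 by rewrite tr_s.
rewrite /mxtrace raddf_sum (bigD1 k) //= => <-.
by rewrite lerDl sumr_ge0.
Qed.

Lemma density_entry_bounds (s : 'M[C]_d) i j :
  density d s -> `|Re (s i j)| <= 1 /\ `|Im (s i j)| <= 1.
Proof.
move=> ds; have [/psdP[s_herm s_ge0] _] := ds.
have sji : s j i = (s i j)^* by rewrite {1}s_herm adjE.
have pair_ge0 z : 0 <= Re (s i i + z * s i j + z^* * (s j i + z * s j j)).
  by have := s_ge0 (\col_k ((k == i)%:R + z * (k == j)%:R)); rewrite qf_pair.
have := pair_ge0 1; have := pair_ge0 (-1); have := pair_ge0 'i; have := pair_ge0 (- 'i).
move: (density_diag_bounds i ds) (density_diag_bounds j ds); rewrite sji.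
case: (s i j) (s i i) (s j j) => a b [p q] [r t] /= ii jj.
by rewrite !ler_norml; lra.
Qed.

End DensityEntries.

Section Convergence.
Lemma cvg_sum (I : Type) (r : seq I) (f : I -> R ^nat) (l : I -> R) :
  (forall i, f i @ \oo --> l i) ->
  (fun n => \sum_(i <- r) f i n) @ \oo --> \sum_(i <- r) l i.
Proof.
by move=> f_l; apply: (@cvg_big _ _ +%R 0 xpredT add_continuous) => // i _; apply: f_l.
Qed.

Variable d : nat.
Implicit Types (u w : nat -> 'M[C]_d) (A B : 'M[C]_d).

Definition mx_cvg u A := forall i j,
  (fun n => Re (u n i j)) @ \oo --> Re (A i j) /\
  (fun n => Im (u n i j)) @ \oo --> Im (A i j).

Lemma mx_closed_cvg (S : set 'M[C]_d) u A :
  mx_closed S -> (forall n, S (u n)) -> mx_cvg u A -> S A.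
Proof. by move=> S_closed Su uA; apply: S_closed Su _ _ => i j; have [] := uA i j. Qed.

Lemma mx_cvg_cst A : mx_cvg (fun=> A) A.
Proof. by split; apply: cvg_cst. Qed.

Lemma mx_cvgD u w A B : mx_cvg u A -> mx_cvg w B -> mx_cvg (fun n => u n + w n) (A + B).
Proof.
move=> uA wB i j; have [uA_re uA_im] := uA i j; have [wB_re wB_im] := wB i j.
by rewrite !mxE !raddfD; split; under eq_cvg do rewrite mxE raddfD; apply: cvgD.
Qed.

Lemma mx_cvgZ (t : R) u A : mx_cvg u A -> mx_cvg (fun n => t%:C *: u n) (t%:C *: A).
Proof.
move=> uA i j; have [uA_re uA_im] := uA i j.
rewrite !mxE Re_realM Im_realM; split.
  by under eq_cvg do rewrite mxE Re_realM; apply: cvgM => //; apply: cvg_cst.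
by under eq_cvg do rewrite mxE Im_realM; apply: cvgM => //; apply: cvg_cst.
Qed.

Lemma mx_cvgN u A : mx_cvg u A -> mx_cvg (fun n => - u n) (- A).
Proof.
move=> uA i j; have [uA_re uA_im] := uA i j.
by rewrite !mxE !raddfN; split; under eq_cvg do rewrite mxE raddfN; apply: cvgN.
Qed.

Lemma mx_cvgB u w A B : mx_cvg u A -> mx_cvg w B -> mx_cvg (fun n => u n - w n) (A - B).
Proof. by move=> uA /mx_cvgN; apply: mx_cvgD. Qed.

Lemma mx_cvg_subseq u A (f : nat -> nat) :
  increasing_seq f -> mx_cvg u A -> mx_cvg (u \o f) A.
Proof.
move=> /cvg_increasing_seq f_oo uA i j; have [uA_re uA_im] := uA i j.
by split; [exact: cvg_comp f_oo uA_re | exact: cvg_comp f_oo uA_im].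
Qed.

Lemma frob_cvg u A : mx_cvg u A -> (fun n => frob (u n) (u n)) @ \oo --> frob A A.
Proof.
move=> uA; apply: cvg_sum => i; apply: cvg_sum => j.
by have [uA_re uA_im] := uA i j; apply: cvgD; apply: cvgM.
Qed.

Lemma mx_bolzano_weierstrass u (M : R) :
  (forall n i j, `|Re (u n i j)| <= M /\ `|Im (u n i j)| <= M) ->
  exists2 f : nat -> nat, increasing_seq f & exists A, mx_cvg (u \o f) A.
Proof.
move=> u_bd.
pose coord (k : bool * 'I_d * 'I_d) n :=
  let: (re, i, j) := k in if re then Re (u n i j) else Im (u n i j).
have coord_bd k : bounded_fun (coord k).
  case: k => [[re i] j]; exists M; split; first exact: num_real.
  by move=> x Mx n _; apply: le_trans (ltW Mx); have [] := u_bd n i j; case: re.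
have [f f_incr cvg_f] := bolzano_weierstrass_fin coord_bd.
exists f => //.
exists (\matrix_(i, j) (limn (coord (true, i, j) \o f) +i* limn (coord (false, i, j) \o f))).
by move=> i j; rewrite !mxE; split; [apply: (cvg_f (true, i, j)) | apply: (cvg_f (false, i, j))].
Qed.

Lemma mx_closed_psd : mx_closed (@psd R d).
Proof.
move=> u A u_psd u_re u_im.
have u_herm n i j : u n i j = (u n j i)^* by case: (u_psd n) => herm _; rewrite {1}herm adjE.
apply/psdP; split.
  apply/matrixP => i j; rewrite adjE.
  have re_ji : (fun n => Re (u n i j)) @ \oo --> Re (A j i).
    suff -> : (fun n => Re (u n i j)) = (fun n => Re (u n j i)) by apply: u_re.
    by apply/funext => n; rewrite u_herm; case: (u n j i).
  have im_ji : (fun n => Im (u n i j)) @ \oo --> - Im (A j i).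
    suff -> : (fun n => Im (u n i j)) = (fun n => - Im (u n j i)) by apply: cvgN.
    by apply/funext => n; rewrite u_herm; case: (u n j i).
  have re_eq : Re (A i j) = Re (A j i) by apply: cvg_unique (u_re i j) re_ji.
  have im_eq : Im (A i j) = - Im (A j i) by apply: cvg_unique (u_im i j) im_ji.
  by move: re_eq im_eq; case: (A i j) => a b; case: (A j i) => c e /= -> ->.
move=> v.
have Re_lin (a b : C) i j : (fun n => Re (a * u n i j * b)) @ \oo --> Re (a * A i j * b).
  have E (x : C) : Re (a * x * b) = Re (a * b) * Re x - Im (a * b) * Im x.
    by case: a b x => [? ?] [? ?] [? ?] /=; ring.
  rewrite E; under eq_cvg do rewrite E.
  by apply: cvgB; apply: cvgM; [apply: cvg_cst | apply: u_re | apply: cvg_cst | apply: u_im].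
have qf_cvg : (fun n => Re (qf v (u n))) @ \oo --> Re (qf v A).
  rewrite qfE raddf_sum; under eq_cvg do rewrite qfE raddf_sum.
  apply: cvg_sum => i; rewrite raddf_sum; under eq_cvg do rewrite raddf_sum.
  by apply: cvg_sum => j; apply: Re_lin.
by apply: (cvgr_to_ge qf_cvg); apply: nearW => n; case/psdP: (u_psd n).
Qed.

End Convergence.

Section Separation.
Lemma ge0_of_quadratic (a b : R) : 0 <= b ->
  (forall t, 0 < t <= 1 -> 0 <= 2 * t * a + t ^+ 2 * b) -> 0 <= a.
Proof.
move=> b_ge0 quad_ge0; rewrite leNgt; apply/negP => a_lt0.
have ba_gt0 : 0 < b - a by lra.
pose t := - a / (b - a).
have t_gt0 : 0 < t by rewrite /t divr_gt0 //; lra.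
have t_le1 : t <= 1 by rewrite /t ler_pdivrMr //; lra.
have tb_le : t * b <= - a by rewrite /t mulrAC ler_pdivrMr //; nra.
have := quad_ge0 t; rewrite t_gt0 t_le1 => /(_ isT).
have : 0 < t * - a by apply: mulr_gt0; lra.
nra.
Qed.

Variable d : nat.
Implicit Types (S : set 'M[C]_d) (x y : 'M[C]_d).

Definition psd_lowerset S : set 'M[C]_d := [set y | exists2 x, S x & psd (x - y)].

Lemma psd_lowerset_convex S : mx_convex S -> mx_convex (psd_lowerset S).
Proof.
move=> S_convex y1 y2 t [x1 Sx1 psd1] [x2 Sx2 psd2] /andP[t_ge0 t_le1].
exists (t%:C *: x1 + (1 - t)%:C *: x2); first by apply: S_convex; rewrite ?t_ge0.
have -> : t%:C *: x1 + (1 - t)%:C *: x2 - (t%:C *: y1 + (1 - t)%:C *: y2) =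
          t%:C *: (x1 - y1) + (1 - t)%:C *: (x2 - y2).
  by apply/matrixP => i j; rewrite !mxE; ring.
by apply: psdD; apply: psdZ; rewrite ?subr_ge0.
Qed.

Lemma psd_lowerset_closed S (M : R) :
  (forall x i j, S x -> `|Re (x i j)| <= M /\ `|Im (x i j)| <= M) ->
  mx_closed S -> mx_closed (psd_lowerset S).
Proof.
move=> S_bd S_closed y_ y y_low y_re y_im.
have x_ex n : exists x, S x /\ psd (x - y_ n).
  by have [x Sx psd_xy] := y_low n; exists x.
have [x_ x_spec] := choice x_ex.
have [f f_incr [x xf_x]] :=
  @mx_bolzano_weierstrass d x_ M (fun n i j => S_bd _ i j (x_spec n).1).
exists x; first by apply: mx_closed_cvg S_closed _ xf_x => n; apply: (x_spec (f n)).1.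
apply: (mx_closed_cvg (@mx_closed_psd d) (fun n => (x_spec (f n)).2)).
by apply: mx_cvgB xf_x (mx_cvg_subseq f_incr _) => i j; split.
Qed.

Lemma mx_closed_min_frob S : S !=set0 -> mx_closed S ->
  exists2 x, S x & forall y, S y -> frob x x <= frob y y.
Proof.
move=> [y0 Sy0] S_closed.
have abs_le (a K : R) : a ^+ 2 <= K -> `|a| <= 1 + K.
  move=> a2_le; have := sqr_ge0 a; have := sqr_ge0 (a - 1); have := sqr_ge0 (a + 1).
  by rewrite ler_norml => *; apply/andP; split; nra.
pose N := [set frob y y | y in S].
have N_inf : has_inf N.
  by split; [exists (frob y0 y0), y0 | exists 0 => _ [y _ <-]; apply: frob_ge0].
set m := inf N.
have m_le y : S y -> m <= frob y y by move=> Sy; apply: ge_inf N_inf.2 _ _; exists y.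
have x_ex n : exists x, S x /\ frob x x < m + n.+1%:R^-1.
  have eps_gt0 : 0 < n.+1%:R^-1 :> R by rewrite invr_gt0.
  by have [_ [x Sx <-] x_lt] := inf_adherent eps_gt0 N_inf; exists x.
have [x_ x_spec] := choice x_ex.
have x_bd n i j : `|Re (x_ n i j)| <= 1 + (1 + m) /\ `|Im (x_ n i j)| <= 1 + (1 + m).
  have := entry_le_frob (x_ n) i j; have [_ x_lt] := x_spec n.
  have : n.+1%:R^-1 <= 1 :> R by rewrite invf_le1 ?ler1n ?ltr0Sn.
  move: (n.+1%:R^-1) x_lt => e x_lt e_le1 ab_le.
  have := sqr_ge0 (Re (x_ n i j)); have := sqr_ge0 (Im (x_ n i j)).
  by move=> *; split; apply: abs_le; lra.
have [f f_incr [x xf_x]] := mx_bolzano_weierstrass x_bd.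
exists x; first by apply: mx_closed_cvg S_closed _ xf_x => n; apply: (x_spec (f n)).1.
suff x_le_m : frob x x <= m by move=> y Sy; apply: le_trans x_le_m (m_le y Sy).
have m_cvg : (fun n => m + (f n).+1%:R^-1) @ \oo --> m.
  rewrite -[X in _ --> X]addr0; apply: cvgD; first exact: cvg_cst.
  exact: cvg_comp (cvg_increasing_seq f_incr) cvg_harmonic.
apply: (ler_cvg_to (frob_cvg xf_x) m_cvg); apply: nearW => n /=.
exact/ltW/(x_spec (f n)).2.
Qed.

Lemma min_frob_variational S x : mx_convex S -> S x ->
  (forall y, S y -> frob x x <= frob y y) -> forall y, S y -> frob x x <= frob x y.
Proof.
move=> S_convex Sx x_min y Sy.
have S_segment t : 0 < t <= 1 -> S (x + t%:C *: (y - x)).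
  move=> /andP[t_gt0 t_le1].
  have -> : x + t%:C *: (y - x) = t%:C *: y + (1 - t)%:C *: x.
    by apply/matrixP => i j; rewrite !mxE; ring.
  by apply: S_convex; rewrite ?(ltW t_gt0).
suff : 0 <= frob x (y - x) by rewrite frobDr frobNr subr_ge0.
move: (y - x) S_segment => w S_segment.
apply: (ge0_of_quadratic (frob_ge0 w)) => t t01.
have := x_min _ (S_segment t t01).
by rewrite frobDl !frobDr !frobZl !frobZr (frobC w x); nra.
Qed.

Lemma psd_separation S (M : R) :
  S !=set0 -> mx_convex S -> mx_closed S ->
  (forall x i j, S x -> `|Re (x i j)| <= M /\ `|Im (x i j)| <= M) ->
  (forall x, S x -> x = adj x /\ ~ psd x) ->
  exists2 W, psd W & exists2 del : R, 0 < del & forall x, S x -> frob W x + del <= 0.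
Proof.
move=> [x0 Sx0] S_convex S_closed S_bd S_herm.
set L := psd_lowerset S.
have S_L x : S x -> L x by exists x => //; rewrite subrr; apply: psd0.
have [z Lz z_min] :=
  mx_closed_min_frob (ex_intro _ x0 (S_L _ Sx0)) (psd_lowerset_closed S_bd S_closed).
have z_var := min_frob_variational (psd_lowerset_convex S_convex) Lz z_min.
have [x Sx psd_xz] := Lz.
have z_herm : z = adj z.
  have [x_herm _] := S_herm x Sx; have [xz_herm _] := psd_xz.
  by move: xz_herm; rewrite adjD adjN -x_herm => /addrI/oppr_inj.
exists (- z).
  apply/psdP; split; first by rewrite adjN -z_herm.
  move=> v; rewrite -frob_rank1 frobNl oppr_ge0.
  have : L (z - v *m adj v).
    exists x => //; have -> : x - (z - v *m adj v) = (x - z) + v *m adj v.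
      by rewrite opprB addrCA addrC.
    exact: psdD psd_xz (psd_rank1 v).
  by move=> /z_var; rewrite frobDr frobNr; lra.
exists (frob z z).
  rewrite lt_def frob_ge0 andbT; apply/eqP => /frob_eq0 z0.
  by have [_ []] := S_herm x Sx; move: psd_xz; rewrite z0 subr0.
by move=> y Sy; have := z_var _ (S_L _ Sy); rewrite frobNl; lra.
Qed.

End Separation.

Section DensitySeparation.
Variable d : nat.
Implicit Types (F : set 'M[C]_d) (B rho : 'M[C]_d).

Lemma mx_convex_affine F (c : R) B :
  mx_convex F -> mx_convex [set c%:C *: s + B | s in F].
Proof.
move=> F_convex _ _ t [s1 Fs1 <-] [s2 Fs2 <-] t01.
exists (t%:C *: s1 + (1 - t)%:C *: s2); first exact: F_convex.
by apply/matrixP => i j; rewrite !mxE; ring.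
Qed.

Lemma mx_closed_affine F (c : R) B :
  c != 0 -> mx_closed F -> mx_closed [set c%:C *: s + B | s in F].
Proof.
move=> c_neq0 F_closed u x u_img u_re u_im.
have u_cvg : mx_cvg u x by move=> i j; split.
exists (c^-1%:C *: (x - B)); last by rewrite scalerA -rmorphM mulfV // scale1r subrK.
apply: (mx_closed_cvg F_closed (u := fun n => c^-1%:C *: (u n - B))).
  by move=> n; have [s Fs <-] := u_img n; rewrite addrK scalerA -rmorphM mulVf // scale1r.
exact: mx_cvgZ (mx_cvgB u_cvg (mx_cvg_cst B)).
Qed.

Lemma psd_separation_density F rho (c : R) :
  F `<=` density d -> F !=set0 -> mx_convex F -> mx_closed F ->
  density d rho -> 0 < c -> (forall s, F s -> ~ psd (c%:C *: s - rho)) ->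
  exists2 W, psd W & exists2 del : R, 0 < del &
    forall s, F s -> c * frob W s + del <= frob W rho.
Proof.
move=> F_dens [s0 Fs0] F_convex F_closed rho_dens c_gt0 F_npsd.
have entry_le (a b : R) : `|a| <= 1 -> `|b| <= 1 -> `|c * a - b| <= c + 1.
  by rewrite !ler_norml => /andP[? ?] /andP[? ?]; apply/andP; split; nra.
set S := [set c%:C *: s + - rho | s in F].
have [W W_psd [del del_gt0 W_sep]] : exists2 W, psd W &
    exists2 del : R, 0 < del & forall x, S x -> frob W x + del <= 0.
  apply: (@psd_separation d S (c + 1)).
  - by exists (c%:C *: s0 - rho), s0.
  - exact: mx_convex_affine.
  - by apply: mx_closed_affine; rewrite // gt_eqF.
  - move=> _ i j [s Fs <-]; have [s_re s_im] := density_entry_bounds i j (F_dens _ Fs).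
    have [rho_re rho_im] := density_entry_bounds i j rho_dens.
    by rewrite !mxE !raddfD !raddfN /= Re_realM Im_realM !entry_le.
  - move=> _ [s Fs <-]; split; last exact: F_npsd.
    have [[s_herm _] _] := F_dens _ Fs; have [[rho_herm _] _] := rho_dens.
    by rewrite adjD adjN adj_realZ -s_herm -rho_herm.
exists W => //; exists del => // s Fs.
have /W_sep : S (c%:C *: s - rho) by exists s.
by rewrite frobDr frobNr frobZr; lra.
Qed.

End DensitySeparation.

Lemma channel_linear d d' (L : 'M[C]_d -> 'M[C]_d') (a b : R) X Y : is_channel L ->
  L (a%:C *: X + b%:C *: Y) = a%:C *: L X + b%:C *: L Y.
Proof.
case=> m [K [_ L_kraus]]; rewrite !L_kraus !scaler_sumr -big_split.
by apply: eq_bigr => j _; rewrite mulmxDr mulmxDl -!scalemxAr -!scalemxAl.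
Qed.

Lemma channel_psd d d' (L : 'M[C]_d -> 'M[C]_d') X : is_channel L -> psd X -> psd (L X).
Proof. by case=> m [K [_ ->]] X_psd; apply: psd_sum => j _; apply: psd_conj. Qed.

Lemma psucc_linear d (g : game R d) (a b : R) X Y : valid_game g ->
  psucc (a%:C *: X + b%:C *: Y) g = a * psucc X g + b * psucc Y g.
Proof.
case=> _ [g_chan _]; rewrite /psucc !mulr_sumr -big_split; apply: eq_bigr => i _.
rewrite channel_linear // mulmxDr -!scalemxAr mxtraceD !mxtraceZ raddfD /= !Re_realM.
ring.
Qed.

Lemma psucc_ge0 d (g : game R d) X : valid_game g -> psd X -> 0 <= psucc X g.
Proof.
case=> [[p_ge0 _] [g_chan [M_psd _]]] X_psd; apply: sumr_ge0 => i _.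
have : 0 <= \tr (g_M i *m g_L i X).
  exact: psd_trace_mul_ge0 (M_psd i) (channel_psd (g_chan i) X_psd).
by rewrite lecE => /andP[_ tr_ge0]; apply: mulr_ge0.
Qed.

Definition measure_game d (W : 'M[C]_d) : game R d :=
  @Game R d 2 d (fun i => if i == ord0 then 1 else 0) (fun _ X => X)
    (fun i => if i == ord0 then W else 1%:M - W).

Lemma measure_game_valid d (W : 'M[C]_d) :
  psd W -> psd (1%:M - W) -> valid_game (measure_game W).
Proof.
move=> W_psd W'_psd; split; [|split].
- split; first by move=> i /=; case: (_ == _).
  by rewrite big_ord_recl big_ord1 /= addr0.
- move=> i; exists 1%N, (fun _ => 1%:M); split.
    by rewrite big_ord1 adj_mx1 mul1mx.
  by move=> X; rewrite big_ord1 adj_mx1 mul1mx mulmx1.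
- split; first by move=> i /=; case: (_ == _).
  by rewrite big_ord_recl big_ord1 /= addrC subrK.
Qed.

Lemma psucc_measure_game d (W w : 'M[C]_d) :
  psucc w (measure_game W) = Re (\tr (W *m w)).
Proof. by rewrite /psucc big_ord_recl big_ord1 /= mul1r mul0r addr0. Qed.

Section ExtendedRatio.
Local Open Scope ereal_scope.

Lemma ratio_le (a c : R) (M : \bar R) : (0 <= a)%R -> (0 < c)%R ->
  (a / c)%:E <= M -> a%:E * M^-1 <= c%:E.
Proof.
move=> a_ge0 c_gt0; case: M => [m| _ |]; last by rewrite leeNy_eq.
  2: by rewrite invey mule0 lee_fin ltW.
rewrite lee_fin inver; case: eqP => [-> | /eqP m_neq0] ac_le.
  have -> : a = 0%R by move: ac_le; rewrite ler_pdivrMr // mul0r; lra.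
  by rewrite mul0e lee_fin ltW.
have m_gt0 : (0 < m)%R by rewrite lt_def m_neq0 /= (le_trans _ ac_le) // divr_ge0 // ltW.
by rewrite -EFinM lee_fin ler_pdivrMr // mulrC -ler_pdivrMr.
Qed.

Lemma ratio_ge (a c e : R) (M : \bar R) : (0 < c)%R -> (0 < e)%R -> 0 <= M ->
  M <= ((a - e) / c)%:E -> c%:E <= a%:E * M^-1.
Proof.
move=> c_gt0 e_gt0; case: M => [m||] //; rewrite ?leye_eq // !lee_fin => m_ge0 m_le.
have cm_le : (c * m <= a - e)%R by rewrite mulrC -ler_pdivlMr.
rewrite inver; case: eqP => [m0 | /eqP m_neq0].
  by rewrite gt0_muley ?leey // lte_fin; move: cm_le; rewrite m0 mulr0; lra.
have m_gt0 : (0 < m)%R by rewrite lt_def m_neq0 m_ge0.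
by rewrite -EFinM lee_fin ler_pdivlMr //; lra.
Qed.

Lemma lee_real_lbounds (x y : \bar R) : 1 <= x ->
  (forall c : R, (1 < c)%R -> c%:E < y -> c%:E <= x) -> y <= x.
Proof.
case: x => [r||] // r_ge1 x_lb; last by rewrite leey.
rewrite lee_fin in r_ge1; rewrite leNgt; apply/negP => r_lt.
have [c [c_gt1 c_lt c_gt]] : exists c : R, [/\ (1 < c)%R, c%:E < y & (r < c)%R].
  case: y r_lt {x_lb} => [q||] // r_lt.
    by exists ((r + q) / 2)%R; rewrite lte_fin in r_lt; split; rewrite ?lte_fin; lra.
  by exists (r + 1)%R; split; rewrite ?ltry //; lra.
by have := x_lb c c_gt1 c_lt; rewrite lee_fin; lra.
Qed.

End ExtendedRatio.

Section RatioBounds.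
Variable d : nat.
Implicit Types (F U : set 'M[C]_d) (rho sigma tau : 'M[C]_d).

Lemma max_psucc_ge0 F (g : game R d) :
  F `<=` density d -> F !=set0 -> valid_game g -> (0 <= max_psucc F g)%E.
Proof.
move=> F_dens [s Fs] g_valid.
have : ((psucc s g)%:E <= max_psucc F g)%E by apply: ereal_sup_ubound; exists s.
by apply: le_trans; rewrite lee_fin psucc_ge0 //; case: (F_dens _ Fs).
Qed.

Lemma max_ratio_ge1 F rho :
  F `<=` density d -> F !=set0 -> density d rho -> (1 <= max_ratio rho F)%E.
Proof.
move=> F_dens [s Fs] [_ rho_tr].
pose g := measure_game (1%:M : 'M[C]_d).
have g_valid : valid_game g.
  by apply: measure_game_valid; rewrite ?subrr; [apply: psd1 | apply: psd0].
have psucc1 x : \tr x = 1 -> psucc x g = 1 by move=> x_tr; rewrite psucc_measure_game mul1mx x_tr.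
apply: le_trans (_ : game_ratio rho F g <= _)%E; last by apply: ereal_sup_ubound; exists g.
rewrite /game_ratio; have -> : max_psucc F g = 1%E.
  apply/eqP; rewrite eq_le; apply/andP; split.
    by apply: ge_ereal_sup => _ [x Fx <-]; rewrite psucc1 //; case: (F_dens _ Fx).
  by apply: ereal_sup_ubound; exists s => //; rewrite psucc1 //; case: (F_dens _ Fs).
by rewrite inve1 mule1 psucc1.
Qed.

Lemma max_ratio_le F rho (s : R) tau :
  F `<=` density d -> density d rho -> 0 <= s -> density d tau ->
  F (((1 + s)^-1)%:C *: (rho + s%:C *: tau)) -> (max_ratio rho F <= (1 + s)%:E)%E.
Proof.
move=> F_dens [rho_psd _] s_ge0 [tau_psd _]; set sigma := _ *: _ => F_sigma.
apply: ge_ereal_sup => _ [g g_valid <-]; apply: ratio_le; rewrite ?psucc_ge0 //; first lra.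
apply: le_trans (_ : (psucc sigma g)%:E <= _)%E; last by apply: ereal_sup_ubound; exists sigma.
rewrite lee_fin /sigma scalerDr scalerA -rmorphM psucc_linear // mulrC lerDl.
by rewrite !mulr_ge0 ?invr_ge0 ?psucc_ge0 //; lra.
Qed.

Lemma max_ratio_ge F rho (c : R) :
  F `<=` density d -> F !=set0 -> mx_convex F -> mx_closed F ->
  density d rho -> 0 < c -> (forall s, F s -> ~ psd (c%:C *: s - rho)) ->
  (c%:E <= max_ratio rho F)%E.
Proof.
move=> F_dens F_ne F_convex F_closed rho_dens c_gt0 F_npsd.
have [W W_psd [del del_gt0 W_sep]] :=
  psd_separation_density F_dens F_ne F_convex F_closed rho_dens c_gt0 F_npsd.
set a := (1 + mx_l1 W)^-1.
have a_gt0 : 0 < a by rewrite invr_gt0; have := mx_l1_ge0 W; lra.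
pose g := measure_game (a%:C *: W).
have g_valid : valid_game g :=
  measure_game_valid (psdZ (ltW a_gt0) W_psd) (psd_le1_normalized W_psd).
have psucc_g x : density d x -> psucc x g = a * frob W x.
  by case=> [[x_herm _] _]; rewrite psucc_measure_game -scalemxAl mxtraceZ Re_realM frob_trace.
apply: le_trans (_ : game_ratio rho F g <= _)%E; last by apply: ereal_sup_ubound; exists g.
apply: (@ratio_ge _ _ (a * del)) => //; first exact: mulr_gt0.
  exact: max_psucc_ge0.
apply: ge_ereal_sup => _ [s Fs <-].
rewrite lee_fin ler_pdivlMr // !psucc_g //; last exact: F_dens.
by have := ler_wpM2l (ltW a_gt0) (W_sep s Fs); nra.
Qed.

Lemma gen_robustness_le U rho sigma (c : R) :
  density d rho -> density d sigma -> U sigma -> 1 < c -> psd (c%:C *: sigma - rho) ->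
  (gen_robustness U rho <= (c - 1)%:E)%E.
Proof.
move=> [_ rho_tr] [_ sigma_tr] U_sigma c_gt1 gap_psd.
have s_gt0 : 0 < c - 1 by rewrite subr_gt0.
apply: ereal_inf_lbound; exists (c - 1) => //; split; first exact: ltW.
exists (((c - 1)^-1)%:C *: (c%:C *: sigma - rho)); split.
  split; first by apply: psdZ; rewrite ?invr_ge0 ?ltW.
  rewrite mxtraceZ raddfB /= mxtraceZ rho_tr sigma_tr.
  have c1_neq0 : c - 1 != 0 by rewrite gt_eqF.
  by apply/eqP; rewrite eq_complex /=; apply/andP; split; apply/eqP; field.
have -> : rho + (c - 1)%:C *: (((c - 1)^-1)%:C *: (c%:C *: sigma - rho)) = c%:C *: sigma.
  by rewrite scalerA -rmorphM mulfV ?gt_eqF // scale1r addrC subrK.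
by rewrite scalerA -rmorphM [1 + _]addrC subrK mulVf ?scale1r // gt_eqF //; lra.
Qed.

End RatioBounds.

End QuantumResourceGames.

Unset Implicit Arguments.

Theorem theorem7 (R : realType) (d : nat) (K : Type)
  (Fk : K -> set 'M[R[i]]_d) (rho : 'M[R[i]]_d) :
  (forall k, Fk k `<=` density d) ->
  (forall k, Fk k !=set0) ->
  (forall k, mx_convex (Fk k)) ->
  (forall k, mx_closed (Fk k)) ->
  mx_closed (\bigcup_k Fk k) ->
  density d rho ->
  ~ (\bigcup_k Fk k) rho ->
  ereal_inf [set max_ratio rho (Fk k) | k in [set: K]]
    = (1 + gen_robustness (\bigcup_k Fk k) rho)%E.
Proof.
move=> F_dens F_ne F_convex F_closed _ rho_dens _.
set U := \bigcup_k Fk k; set RF := gen_robustness U rho.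
apply/eqP; rewrite eq_le; apply/andP; split.
  rewrite -leeBlDl //; apply: le_ereal_inf_tmp => _ [s [s_ge0 [tau [tau_dens U_sigma]]] <-].
  have [k _ Fk_sigma] := U_sigma.
  rewrite leeBlDl // -EFinD.
  apply: le_trans (max_ratio_le (F_dens k) rho_dens s_ge0 tau_dens Fk_sigma).
  by apply: ereal_inf_lbound; exists k.
apply: le_ereal_inf_tmp => _ [k _ <-]; apply: lee_real_lbounds; first exact: max_ratio_ge1.
move=> c c_gt1 c_lt; apply: max_ratio_ge => //; first exact: lt_trans c_gt1.
move=> sigma Fk_sigma gap_psd.
have U_sigma : U sigma by exists k.
have /(leeD2l 1) := gen_robustness_le rho_dens (F_dens k _ Fk_sigma) U_sigma c_gt1 gap_psd.
by rewrite -EFinD subrKC leNgt c_lt.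
Qed.
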